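(* Let $t\ge 1$ be an integer and $n=2(t+1)^2$. For each $0\le i\le t$, let $\mathcal{C}_i\subseteq\mathbb{Z}_n^2$ be the linear code generated by the rows of \[ G_i=\begin{bmatrix} t+1+i & t+1-i\\ i & 2(t+1)-i\end{bmatrix}. \] Then every translate $\mathbf{x}+\mathcal{C}_i$ ($\mathbf{x}\in\mathbb{Z}_n^2$) is a $(2t+1)$-diameter perfect code with minimum distance $2t+2$ and anticode $\mathcal{A}_{2t+1}$.
   Context: $\mathbb{Z}_n$ is the ring of integers modulo $n$. A code of length $m$ is a subset of $\mathbb{Z}_n^m$; it is linear if it is a submodule, and the code generated by a matrix is the submodule spanned by its rows. The Lee weight of $\mathbf{u}=(u_1,\dots,u_m)\in\mathbb{Z}_n^m$ is $\mathrm{wt}_L(\mathbf{u})=\sum_i\min\{u_i,n-u_i\}$ (with $u_i$ represented in $\{0,\dots,n-1\}$), and the Lee distance is $d_L(\mathbf{u},\mathbf{v})=\mathrm{wt}_L(\mathbf{u}-\mathbf{v})$; all distances are Lee distances. The minimum distance of a code is the minimum Lee distance between distinct codewords. A translate of $\mathcal{C}$ by $\mathbf{x}$ is $\mathbf{x}+\mathcal{C}=\{\mathbf{x}+\mathbf{c}:\mathbf{c}\in\mathcal{C}\}$. An anticode of diameter $D$ is a subset in which the maximum distance between two elements is $D$. For an adjacent pair $\{p_1,p_2\}$ of points (Lee distance $1$) and $2t+1\le n$, $\mathcal{A}_{2t+1}$ denotes the set of all points at distance at most $t$ from $\{p_1,p_2\}$ (i.e. from $p_1$ or from $p_2$); $\{p_1,p_2\}$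 is its core. Code–anticode bound: if $\mathcal{C}$ has minimum distance $d$ and $\mathcal{A}$ is an anticode of diameter $D=d-1$, then $|\mathcal{C}|\cdot|\mathcal{A}|\le|\mathbb{Z}_n^m|$; a code attaining equality (with $\mathcal{A}$ an anticode of maximum size for diameter $D$) is called a $D$-diameter perfect code (with anticode $\mathcal{A}$). *)

From HB Require Import structures.
From mathcomp Require Import all_boot all_order all_algebra.
Set Implicit Arguments. Unset Strict Implicit. Unset Printing Implicit Defensive.
Import Order.TTheory GRing.Theory Num.Theory.
Local Open Scope ring_scope.

(* Lee weight of a : Z_n, with a represented in {0,...,n-1} (needs 1 < n). *)
Definition leeZ (n : nat) (a : 'Z_n) : nat := minn (a : nat) (n - a)%N.

Definition lee_wt (n m : nat) (u : 'rV['Z_n]_m) : nat :=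
  (\sum_(j < m) leeZ (u ord0 j))%N.

Definition lee_dist (n m : nat) (u v : 'rV['Z_n]_m) : nat := lee_wt (u - v).

Definition lin_code (n k m : nat) (G : 'M['Z_n]_(k, m)) : {set 'rV['Z_n]_m} :=
  [set u *m G | u : 'rV['Z_n]_k].

Definition translate (n m : nat) (x : 'rV['Z_n]_m) (C : {set 'rV['Z_n]_m}) :
  {set 'rV['Z_n]_m} := [set x + c | c in C].

Definition has_min_dist (n m : nat) (C : {set 'rV['Z_n]_m}) (d : nat) : Prop :=
  (exists c1, exists c2, [/\ c1 \in C, c2 \in C, c1 != c2 & lee_dist c1 c2 = d])
  /\ (forall c1 c2, c1 \in C -> c2 \in C -> c1 != c2 -> (d <= lee_dist c1 c2)%N).

Definition diam_le (n m : nat) (A : {set 'rV['Z_n]_m}) (D : nat) : Prop :=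
  forall a b, a \in A -> b \in A -> (lee_dist a b <= D)%N.

Definition anticode_of_diam (n m : nat) (A : {set 'rV['Z_n]_m}) (D : nat) : Prop :=
  diam_le A D /\ exists a, exists b, [/\ a \in A, b \in A & lee_dist a b = D].

Definition anticodeA (n m : nat) (t : nat) (p1 p2 : 'rV['Z_n]_m) : {set 'rV['Z_n]_m} :=
  [set x | (lee_dist x p1 <= t)%N || (lee_dist x p2 <= t)%N].

Definition diameter_perfect (n m : nat) (C : {set 'rV['Z_n]_m}) (D : nat)
    (A : {set 'rV['Z_n]_m}) : Prop :=
  [/\ has_min_dist C D.+1,
      anticode_of_diam A D,
      (forall B : {set 'rV['Z_n]_m}, diam_le B D -> #|B| <= #|A|)%N
    & (#|C| * #|A| = #|[set: 'rV['Z_n]_m]|)%N].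

Definition Gmat (n t i : nat) : 'M['Z_n]_2 :=
  \matrix_(r < 2, c < 2)
    ((if (r : nat) == 0%N then
        (if (c : nat) == 0%N then (t + 1 + i)%N else (t + 1 - i)%N)
      else
        (if (c : nat) == 0%N then i else (2 * (t + 1) - i)%N))%:R : 'Z_n).

(* The Lee distance on Z_n^2 is translation invariant, so x + C_i has the
   minimum distance of C_i, its least nonzero weight.  With m = t + 1, a codeword
   (x, y) = (a(m + i) + b i, a(m - i) + b(2m - i)) has x + y = 0 (mod 2m); if
   |x| + |y| < 2m for the centred representatives, then y = -x, and x is a
   multiple of m with |x| < m, so the codeword is 0.  The first row of G_i has
   weight 2m = 2t + 2.  The coefficients (a - b, b), 0 <= a < m, 0 <= b < 2m,
   give n = 2m^2 distinct codewords, and A_{2t+1} has diameter 2t + 1 and at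
   least n points.  If c + b = c' + b' with c, c' in the code and b, b' in a set B
   of diameter at most 2t + 1, then d(c, c') = d(b', b) forces c = c'; hence
   |C| |B| <= n^2, which with |C|, |A| >= n gives |C| |A| = n^2 and the
   maximality of |A|. *)

From HB Require Import structures.
From mathcomp Require Import all_boot all_order all_algebra.
From mathcomp Require Import zify ring.

Set Implicit Arguments. Unset Strict Implicit. Unset Printing Implicit Defensive.
Import Order.TTheory GRing.Theory Num.Theory.
Local Open Scope ring_scope.

Section LeeWeight.

Variable n : nat.
Hypothesis n_gt1 : (1 < n)%N.

Lemma Zn_val_lt (z : 'Z_n) : ((z : nat) < n)%N.
Proof. by have := ltn_ord z; move: (z : nat) => v; rewrite Zp_cast. Qed.

Definition sym_rep (z : 'Z_n) : int :=
  if (2 * (z : nat) <= n)%N then (z : nat)%:Z else (z : nat)%:Z - n%:Z.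

Lemma sym_repK (z : 'Z_n) : (sym_rep z)%:~R = z.
Proof.
have n0 : (n%:R : 'Z_n) = 0 by rewrite pchar_Zp.
rewrite /sym_rep; case: ifP => _; rewrite ?intrB -!pmulrn natr_Zp //.
by rewrite n0 subr0.
Qed.

Lemma leeZE (z : 'Z_n) : leeZ z = `|sym_rep z|%N.
Proof. by have := Zn_val_lt z; rewrite /leeZ /sym_rep; case: ifP; lia. Qed.

Lemma sym_rep_le (z : 'Z_n) : (2 * `|sym_rep z| <= n)%N.
Proof. by have := Zn_val_lt z; rewrite /sym_rep; case: ifP; lia. Qed.

Lemma intr_Zn_eq (k l : int) :
  (k%:~R : 'Z_n) = l%:~R -> exists q : int, k - l = q * n%:Z.
Proof.
move/eqP; rewrite -subr_eq0 -intrB; move: (k - l) => {k l} d.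
have natP (a : nat) : (a%:R : 'Z_n) == 0 -> exists q : int, a%:Z = q * n%:Z.
  move/eqP/(congr1 (@nat_of_ord _)); rewrite val_Zp_nat //= => /eqP.
  by case/dvdnP=> q ->; exists q%:Z.
case: d => a; first exact: natP.
by rewrite NegzE intrN oppr_eq0 => /natP [q hq]; exists (- q); rewrite hq mulNr.
Qed.

Lemma leeZ_intr_le (k : int) : (leeZ (k%:~R : 'Z_n) <= `|k|)%N.
Proof.
have := sym_rep_le (k%:~R); rewrite leeZE.
have [q] := intr_Zn_eq (sym_repK (k%:~R)).
have : q = 0 \/ 1 <= q \/ q <= -1 by lia.
by case=> [|[]] ? ?; nia.
Qed.

Lemma leeZ_intr (k : int) : (2 * `|k| <= n)%N -> leeZ (k%:~R : 'Z_n) = `|k|%N.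
Proof.
have := sym_rep_le (k%:~R); rewrite leeZE.
have [q] := intr_Zn_eq (sym_repK (k%:~R)).
have : q = 0 \/ q = 1 \/ q = -1 \/ 2 <= q \/ q <= -2 by lia.
by case=> [|[|[|[]]]] ? ? ?; nia.
Qed.

Lemma leeZD (a b : 'Z_n) : (leeZ (a + b)%R <= leeZ a + leeZ b)%N.
Proof.
rewrite -[a]sym_repK -[b]sym_repK -intrD; apply: leq_trans (leeZ_intr_le _) _.
by rewrite !leeZ_intr ?sym_rep_le //; lia.
Qed.

Lemma leeZN (a : 'Z_n) : leeZ (- a) = leeZ a.
Proof. by rewrite -[a]sym_repK -intrN !leeZ_intr ?abszN ?sym_rep_le. Qed.

Section Rows.

Variable m : nat.
Implicit Types u v w : 'rV['Z_n]_m.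

Lemma lee_wtD u v : (lee_wt (u + v) <= lee_wt u + lee_wt v)%N.
Proof. by rewrite /lee_wt -big_split; apply: leq_sum => j _; rewrite mxE leeZD. Qed.

Lemma lee_wtN u : lee_wt (- u) = lee_wt u.
Proof. by apply: eq_bigr => j _; rewrite mxE leeZN. Qed.

Lemma lee_distxx u : lee_dist u u = 0%N.
Proof. by rewrite /lee_dist subrr /lee_wt big1 // => j _; rewrite mxE /leeZ min0n. Qed.

Lemma lee_distC u v : lee_dist u v = lee_dist v u.
Proof. by rewrite /lee_dist -lee_wtN opprB. Qed.

Lemma lee_dist_triangle u v w : (lee_dist u w <= lee_dist u v + lee_dist v w)%N.
Proof. by have := lee_wtD (u - v) (v - w); rewrite addrA subrK. Qed.

Lemma lee_distDl w u v : lee_dist (w + u) (w + v) = lee_dist u v.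
Proof. by rewrite /lee_dist opprD addrACA subrr add0r. Qed.

Lemma anticodeA_diam t (p1 p2 : 'rV['Z_n]_m) :
  (lee_dist p1 p2 <= 1)%N -> diam_le (anticodeA t p1 p2) (2 * t + 1).
Proof.
move=> p12 a b; rewrite !inE.
have near_core (pa pb : 'rV['Z_n]_m) : (lee_dist pa pb <= 1)%N ->
    (lee_dist a pa <= t)%N -> (lee_dist b pb <= t)%N -> (lee_dist a b <= 2 * t + 1)%N.
  move=> hab ha; rewrite lee_distC => hb.
  have := lee_dist_triangle a pa b; have := lee_dist_triangle pa pb b; lia.
have p21 : (lee_dist p2 p1 <= 1)%N by rewrite lee_distC.
by case/orP=> ha /orP [] hb;
  [apply: (near_core p1 p1) | apply: (near_core p1 p2)
  | apply: (near_core p2 p1) | apply: (near_core p2 p2)]; rewrite ?lee_distxx.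
Qed.

End Rows.

End LeeWeight.

Lemma code_anticode_bound n m (C B : {set 'rV['Z_n]_m}) (D : nat) :
  (forall c1 c2, c1 \in C -> c2 \in C -> c1 != c2 -> (D < lee_dist c1 c2)%N) ->
  diam_le B D -> (#|C| * #|B| <= #|[set: 'rV['Z_n]_m]|)%N.
Proof.
move=> minC diamB; rewrite -cardsX.
have sum_inj : {in setX C B &, injective (fun p : 'rV_m * 'rV_m => p.1 + p.2)}.
  case=> [c b] [c' b'] /setXP [cC bB] /setXP [c'C b'B] /= eq_sum.
  have eq_c : c = c'.
    apply/eqP; apply: contraT => neq_c; have := minC _ _ cC c'C neq_c.
    have -> : lee_dist c c' = lee_dist b' b.
      by congr lee_wt; apply/eqP; rewrite subr_eq addrAC [b' + c']addrC -eq_sum addrK.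
    by rewrite ltnNge diamB.
  by move: eq_sum; rewrite eq_c => /addrI ->.
by rewrite -(card_in_imset sum_inj) subset_leq_card ?subsetT.
Qed.

Section Plane.

Variable n : nat.
Hypothesis n_gt1 : (1 < n)%N.
Implicit Types u v : 'rV['Z_n]_2.

Definition zrow2 (a b : int) : 'rV['Z_n]_2 :=
  \row_(j < 2) (if (j : nat) == 0%N then a%:~R else b%:~R).

Lemma row2P u v : u ord0 ord0 = v ord0 ord0 -> u ord0 ord_max = v ord0 ord_max -> u = v.
Proof.
move=> eq0 eq1; apply/rowP => -[[|[|//]] j_lt2].
  by rewrite (_ : Ordinal j_lt2 = ord0) //; apply: val_inj.
by rewrite (_ : Ordinal j_lt2 = ord_max) //; apply: val_inj.
Qed.

Lemma zrow2B a b c d : zrow2 a b - zrow2 c d = zrow2 (a - c) (b - d).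
Proof. by apply: row2P; rewrite !mxE /= intrB. Qed.

Lemma zrow2_0 : zrow2 0 0 = 0.
Proof. by apply: row2P; rewrite !mxE. Qed.

Lemma zrow2_sym_rep u : u = zrow2 (sym_rep (u ord0 ord0)) (sym_rep (u ord0 ord_max)).
Proof. by apply: row2P; rewrite !mxE /= sym_repK. Qed.

Lemma zrow2_eq a b c d : zrow2 a b = zrow2 c d ->
  exists q1 q2 : int, a - c = q1 * n%:Z /\ b - d = q2 * n%:Z.
Proof.
move=> eq_ab; have := congr1 (fun u => u ord0 ord0) eq_ab.
have := congr1 (fun u => u ord0 ord_max) eq_ab; rewrite !mxE /=.
by move=> /(intr_Zn_eq n_gt1) [q2 ->] /(intr_Zn_eq n_gt1) [q1 ->]; exists q1, q2.
Qed.

Lemma lee_wt2 u : lee_wt u = (leeZ (u ord0 ord0) + leeZ (u ord0 ord_max))%N.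
Proof.
by rewrite /lee_wt big_ord_recl big_ord1; congr (_ + leeZ (u _ _))%N; apply: val_inj.
Qed.

Lemma lee_wt_zrow2 a b : (2 * `|a| <= n)%N -> (2 * `|b| <= n)%N ->
  lee_wt (zrow2 a b) = (`|a| + `|b|)%N.
Proof. by move=> a_le b_le; rewrite lee_wt2 !mxE /= !leeZ_intr. Qed.

End Plane.

Lemma translate_codeP n k m (G : 'M['Z_n]_(k, m)) (x c : 'rV['Z_n]_m) :
  reflect (exists u, c = x + u *m G) (c \in translate x (lin_code G)).
Proof.
apply: (iffP imsetP) => [[_ /imsetP [u _ ->] ->]|[u ->]]; first by exists u.
by exists (u *m G) => //; apply/imsetP; exists u.
Qed.

Lemma small_multiple_eq0 (d k : int) : 0 < d -> `|d * k| < d -> k = 0.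
Proof. by move=> ? ?; nia. Qed.

Section GmatArithmetic.

Variables m i : int.
Hypotheses (m_ge1 : 1 <= m) (i_ge0 : 0 <= i) (i_lt_m : i < m).

Lemma Gmat_small_codeword_eq0 (A B x y q1 q2 : int) :
  x - (A * (m + i) + B * i) = q1 * (2 * m * m) ->
  y - (A * (m - i) + B * (2 * m - i)) = q2 * (2 * m * m) ->
  `|x| + `|y| < 2 * m -> x = 0 /\ y = 0.
Proof.
move=> ex ey small_xy.
have sum_xy : x + y = (2 * m) * (A + B + (q1 + q2) * m) by lia.
have AB : A + B + (q1 + q2) * m = 0.
  by apply: (@small_multiple_eq0 (2 * m)); rewrite -?sum_xy; lia.
have A_eq : A = - B - (q1 + q2) * m by lia.
subst A.
have x_mul : x = m * (- i * (q1 + q2) - B + (q1 - q2) * m) by lia.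
have : - i * (q1 + q2) - B + (q1 - q2) * m = 0.
  by apply: (@small_multiple_eq0 m); rewrite -?x_mul; lia.
lia.
Qed.

Lemma Gmat_codeword_inj (a b a' b' q1 q2 : int) :
  0 <= a < m -> 0 <= a' < m -> 0 <= b < 2 * m -> 0 <= b' < 2 * m ->
  ((a - b) * (m + i) + b * i) - ((a' - b') * (m + i) + b' * i) = q1 * (2 * m * m) ->
  ((a - b) * (m - i) + b * (2 * m - i)) - ((a' - b') * (m - i) + b' * (2 * m - i))
    = q2 * (2 * m * m) ->
  a = a' /\ b = b'.
Proof.
move=> a_lt a'_lt b_lt b'_lt e1 e2.
have m2_neq0 : 2 * m != 0 by lia.
have sum_eq : (2 * m) * (a - a') = (2 * m) * (m * (q1 + q2)) by lia.
have a_diff := mulfI m2_neq0 sum_eq.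
have q12 : q1 + q2 = 0 by apply: (@small_multiple_eq0 m); rewrite -?a_diff; lia.
have a_eq : a = a' by move: a_diff; rewrite q12 mulr0; lia.
subst a'.
have m_neq0 : m != 0 by lia.
have b_eq : m * (b' - b) = m * (m * (2 * q1)) by lia.
have b_diff := mulfI m_neq0 b_eq.
have : q1 = 0 by apply: (@small_multiple_eq0 (2 * m)); lia.
lia.
Qed.

End GmatArithmetic.

Section Code.

Variables t i n : nat.
Hypotheses (i_le_t : (i <= t)%N) (n_def : n = (2 * (t + 1) ^ 2)%N).
Variable x : 'rV['Z_n]_2.

Let n_gt1 : (1 < n)%N. Proof. by rewrite n_def; nia. Qed.
Let nZ : n%:Z = 2 * (t + 1)%:Z * (t + 1)%:Z. Proof. by rewrite n_def; lia. Qed.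

Local Notation G := (Gmat n t i).
Local Notation C := (translate x (lin_code G)).

Lemma zrow2_mulGmat (a b : int) : zrow2 n a b *m G =
  zrow2 n (a * ((t + 1)%:Z + i%:Z) + b * i%:Z)
          (a * ((t + 1)%:Z - i%:Z) + b * (2 * (t + 1)%:Z - i%:Z)).
Proof.
apply: row2P; rewrite !mxE big_ord_recl big_ord1 !mxE /= !intrD !intrM //.
by rewrite !pmulrn; congr (_ * _%:~R + _ * _%:~R); lia.
Qed.

Lemma Gmat_codeword_wt (u : 'rV['Z_n]_2) :
  u *m G != 0 -> (2 * t + 1 < lee_wt (u *m G))%N.
Proof.
move=> cw_neq0; rewrite ltnNge; apply: contra cw_neq0 => wt_le.
rewrite [u](zrow2_sym_rep n_gt1) zrow2_mulGmat in wt_le *.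
set c := zrow2 n _ _ in wt_le *.
have [q1 [q2 []]] := zrow2_eq n_gt1 (esym (zrow2_sym_rep n_gt1 c)).
rewrite nZ => eq_x eq_y.
rewrite lee_wt2 !(leeZE n_gt1) in wt_le.
have [||||x0 y0] := Gmat_small_codeword_eq0 _ _ _ eq_x eq_y; try lia.
by rewrite [c](zrow2_sym_rep n_gt1) x0 y0 zrow2_0.
Qed.

Lemma translate_Gmat_min_dist : has_min_dist C (2 * t + 1).+1.
Proof.
split=> [|c1 c2 /translate_codeP [u1 ->] /translate_codeP [u2 ->] neq_c].
  have dist_e1 : lee_dist (x + zrow2 n 1 0 *m G) (x + 0 *m G) = (2 * t + 1).+1.
    by rewrite lee_distDl /lee_dist mul0mx subr0 zrow2_mulGmat lee_wt_zrow2 // ?n_def; nia.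
  exists (x + zrow2 n 1 0 *m G), (x + 0 *m G); split=> //; try by apply/translate_codeP; eexists.
  by apply/eqP => eq_c; move: dist_e1; rewrite eq_c lee_distxx.
rewrite lee_distDl /lee_dist -mulmxBl; apply: Gmat_codeword_wt.
by rewrite mulmxBl subr_eq0; apply: contraNneq neq_c => ->.
Qed.

Lemma card_translate_Gmat : (n <= #|C|)%N.
Proof.
pose f (p : 'I_(t + 1) * 'I_(2 * (t + 1))) :=
  x + zrow2 n ((p.1 : nat)%:Z - (p.2 : nat)%:Z) (p.2 : nat)%:Z *m G.
have f_inj : injective f.
  move=> [a b] [a' b'] /addrI; rewrite !zrow2_mulGmat => /(zrow2_eq n_gt1) [q1 [q2 []]].
  rewrite nZ /= => e1 e2.
  have := ltn_ord a; have := ltn_ord a'; have := ltn_ord b; have := ltn_ord b' => *.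
  have [/eqP a_eq /eqP b_eq] : (a : nat)%:Z = a' /\ (b : nat)%:Z = b'.
    by move: e1 e2; apply: Gmat_codeword_inj; lia.
  by congr pair; apply: val_inj; apply/eqP; rewrite -eqz_nat.
apply: (@leq_trans #|[set f p | p in [set: 'I_(t + 1) * 'I_(2 * (t + 1))]]|).
  by rewrite card_imset // cardsT card_prod !card_ord n_def; lia.
by apply/subset_leq_card/subsetP => _ /imsetP [p _ ->]; apply/translate_codeP; eexists.
Qed.

End Code.

Lemma abs_unit_frame (e0 e1 X Y : int) : (`|e0| + `|e1| = 1)%N ->
  absz (X * e0 + Y * e1) = absz X /\ absz (X * e1 + Y * e0) = absz Y \/
  absz (X * e0 + Y * e1) = absz Y /\ absz (X * e1 + Y * e0) = absz X.
Proof.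
move=> unit_e.
have : (e0 = 1 \/ e0 = -1) /\ e1 = 0 \/ e0 = 0 /\ (e1 = 1 \/ e1 = -1) by lia.
by case=> [[[-> | ->] ->] | [-> [-> | ->]]]; lia.
Qed.

Section Anticode.

Variables (n t : nat) (p1 p2 : 'rV['Z_n]_2).
Hypotheses (n_large : (2 * (2 * t + 1) <= n)%N) (p12 : lee_dist p1 p2 = 1%N).

Let n_gt1 : (1 < n)%N. Proof. by lia. Qed.

Local Notation A := (anticodeA t p1 p2).

Let e0 := sym_rep ((p2 - p1) ord0 ord0).
Let e1 := sym_rep ((p2 - p1) ord0 ord_max).

Let unit_e : (`|e0| + `|e1| = 1)%N.
Proof. by move: p12; rewrite lee_distC // /lee_dist lee_wt2 !leeZE. Qed.

(* p1 + X e + Y e' with e = p2 - p1 = (e0, e1) and e' = (e1, e0) a unit vector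
   orthogonal to it: an isometry from small l1-differences to Lee distances. *)
Let pt (X Y : int) : 'rV['Z_n]_2 := p1 + zrow2 n (X * e0 + Y * e1) (X * e1 + Y * e0).

Let pt00 : pt 0 0 = p1.
Proof. by rewrite /pt !mul0r addr0 zrow2_0 addr0. Qed.

Let pt10 : pt 1 0 = p2.
Proof. by rewrite /pt !mul1r !mul0r !addr0 -zrow2_sym_rep // addrC subrK. Qed.

Let lee_dist_pt (X Y X' Y' : int) :
  (2 * `|X - X'| <= n)%N -> (2 * `|Y - Y'| <= n)%N ->
  lee_dist (pt X Y) (pt X' Y') = (`|X - X'| + `|Y - Y'|)%N.
Proof.
move=> X_le Y_le; rewrite /pt lee_distDl /lee_dist zrow2B.
have -> : X * e0 + Y * e1 - (X' * e0 + Y' * e1) = (X - X') * e0 + (Y - Y') * e1 by ring.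
have -> : X * e1 + Y * e0 - (X' * e1 + Y' * e0) = (X - X') * e1 + (Y - Y') * e0 by ring.
by case: (abs_unit_frame (X - X') (Y - Y') unit_e) => -[eq0 eq1];
  rewrite lee_wt_zrow2 ?eq0 ?eq1 // addnC.
Qed.

Let mem_pt (X Y : int) :
  (`|X| + `|Y| <= t)%N \/ (`|X - 1| + `|Y| <= t)%N -> pt X Y \in A.
Proof.
rewrite inE -[in lee_dist _ p1]pt00 -[in lee_dist _ p2]pt10.
by case=> small; apply/orP; [left | right]; rewrite lee_dist_pt; lia.
Qed.

Lemma anticodeA_of_diam : anticode_of_diam A (2 * t + 1).
Proof.
split; first by apply: anticodeA_diam; rewrite ?p12.
exists (pt (- t%:Z) 0), (pt (t + 1)%:Z 0); split; try by apply: mem_pt; lia.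
by rewrite lee_dist_pt; lia.
Qed.

(* The ball of radius t around X = Y = 0 contributes the points with X + Y = t
   (mod 2), the one around X = 1, Y = 0 those with X + Y = t + 1 (mod 2). *)
Lemma card_anticodeA : (2 * (t + 1) ^ 2 <= #|A|)%N.
Proof.
pose g (p : 'I_(t + 1) * 'I_(t + 1) * bool) :=
  pt ((p.1.1 : nat)%:Z + (p.1.2 : nat)%:Z + p.2%:Z - t%:Z) ((p.1.1 : nat)%:Z - (p.1.2 : nat)%:Z).
have g_inj : injective g.
  move=> [[j k] e] [[j' k'] e'] eq_g.
  have d0 : lee_dist (g (j, k, e)) (g (j', k', e')) = 0%N by rewrite eq_g lee_distxx.
  have [ej [ek ee]] : (j : nat) = j' /\ (k : nat) = k' /\ (e : nat) = e'.
    have := ltn_ord j; have := ltn_ord k; have := ltn_ord j'; have := ltn_ord k' => *.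
    move: d0 {eq_g}; case: e; case: e'; rewrite lee_dist_pt /=; lia.
  by clear eq_g d0; congr (_, _, _); [apply: val_inj | apply: val_inj | case: e e' ee => [] []].
apply: (@leq_trans #|[set g p | p in [set: 'I_(t + 1) * 'I_(t + 1) * bool]]|).
  by rewrite card_imset // cardsT !card_prod !card_ord card_bool; lia.
apply/subset_leq_card/subsetP => _ /imsetP [[[j k] e] _ ->].
have j_lt := ltn_ord j; have k_lt := ltn_ord k.
by rewrite /g; apply: mem_pt; case: e => /=; lia.
Qed.

End Anticode.

Theorem mainTheorem1 (t i n : nat) :
  (1 <= t)%N -> (i <= t)%N -> n = (2 * (t + 1) ^ 2)%N ->
  forall (x p1 p2 : 'rV['Z_n]_2), lee_dist p1 p2 = 1%N ->
    diameter_perfect (translate x (lin_code (Gmat n t i))) (2 * t + 1)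
      (anticodeA t p1 p2).
Proof.
move=> _ i_le_t n_def x p1 p2 p12.
set C := translate x _; set A := anticodeA t p1 p2.
have n_large : (2 * (2 * t + 1) <= n)%N by rewrite n_def; nia.
have min_dist_C := translate_Gmat_min_dist i_le_t n_def x.
have card_full : #|[set: 'rV['Z_n]_2]| = (n * n)%N.
  by rewrite cardsT card_mx card_ord Zp_cast; lia.
have packing (B : {set 'rV['Z_n]_2}) : diam_le B (2 * t + 1) -> (#|C| * #|B| <= n * n)%N.
  by rewrite -card_full; apply: code_anticode_bound; case: min_dist_C.
have card_C := card_translate_Gmat i_le_t n_def x.
have card_A : (n <= #|A|)%N by rewrite {1}n_def; apply: card_anticodeA.
have A_anticode := anticodeA_of_diam n_large p12.
have card_CA : (#|C| * #|A| = n * n)%N.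
  by apply/eqP; rewrite eqn_leq packing ?leq_mul //; case: A_anticode.
split=> // [B diam_B|]; last by rewrite card_CA card_full.
by rewrite -(@leq_pmul2l #|C|) ?card_CA ?packing //; lia.
Qed.
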